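(* Let $P[1..m]$ and $S[1..m]$ be strings of the same length over a totally ordered alphabet. Then $$S[\mathcal{PP}_P(i)]\preceq S[i]\preceq S[\mathcal{PC}_P(i)]\ \text{ for all } 1\le i\le m$$ holds if and only if $$S[\mathcal{GP}_P(i)]\preceq S[i]\ \text{ for all } 1\le i\le m.$$
   Context: A string $S$ is a finite sequence $S[1],S[2],\dots$ over an alphabet $\Sigma$ with a total order $<$; $S[i..j]$ denotes the substring $S[i]\cdots S[j]$ (empty if $i>j$). For positions $i,j$ of $S$, write $S[i]\prec S[j]$ iff either $S[i]<S[j]$, or $S[i]$ and $S[j]$ have the same value and $i<j$; write $S[i]\preceq S[j]$ iff $S[i]\prec S[j]$ or $i=j$. Minimum elements are taken with respect to $\prec$ (leftmost among equal minimal values). Prefix-parent representation: $\mathcal{PP}_S(i)=\max\{j: 1\le j<i,\ S[j]\prec S[i]\}$ if such $j$ exists, and $\mathcal{PP}_S(i)=i$ otherwise. Prefix-child representation: $\mathcal{PC}_S(1)=1$, and for $i\ge 2$: if $\mathcal{PP}_S(i)=i$, then $\mathcal{PC}_S(i)$ is the index $j\in[1,i-1]$ such that $S[j]$ is the minimum of $S[1..i-1]$; if $\mathcal{PP}_S(i)=i-1$, then $\mathcal{PC}_S(i)=i$; if $\mathcal{PP}_S(i)<i-1$, then $\mathcal{PC}_S(i)$ is the index $j$ with $\mathcal{PP}_S(i)<j<i$ such that $S[j]$ is the minimum of $S[\mathcal{PP}_S(i)+1..i-1]$. Global-parent representation: $\mathcal{GP}_S(i)=j$ if there is an index $j>i$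 with $\mathcal{PC}_S(j)=i$ (there is at most one such $j$), and $\mathcal{GP}_S(i)=\mathcal{PP}_S(i)$ otherwise. *)

(* Strings are functions nat -> T read at 1-based positions 1..m. *)
From mathcomp Require Import all_boot all_order.
Set Implicit Arguments. Unset Strict Implicit. Unset Printing Implicit Defensive.

Section Defs.
Context {d : Order.disp_t} {T : orderType d}.

Definition prec (S : nat -> T) (i j : nat) : bool :=
  (S i < S j)%O || ((S i == S j) && (i < j)).
Definition preceq (S : nat -> T) (i j : nat) : bool := prec S i j || (i == j).

Fixpoint ppsearch (S : nat -> T) (i k : nat) : option nat :=
  match k with
  | 0 => None
  | k'.+1 => if prec S k i then Some k else ppsearch S i k'
  end.

Definition PP (S : nat -> T) (i : nat) : nat :=
  match ppsearch S i i.-1 with Some j => j | None => i end.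

(* index of the ≺-minimum of S[a..b] (assumes a <= b) *)
Definition argmin (S : nat -> T) (a b : nat) : nat :=
  foldl (fun best k => if prec S k best then k else best) a (iota a.+1 (b - a)).

Definition PC (S : nat -> T) (i : nat) : nat :=
  if i <= 1 then 1
  else if PP S i == i then argmin S 1 i.-1
  else if PP S i == i.-1 then i
  else argmin S (PP S i).+1 i.-1.

Definition GP (S : nat -> T) (m i : nat) : nat :=
  let s := iota i.+1 (m - i) in
  let k := find (fun j => PC S j == i) s in
  if k < size s then nth 0 s k else PP S i.

End Defs.

(* The prefix child PC i, when different from i, is the ≺-minimum of
   the window (lo i, i), where lo i is PP i or 0 if i has no prefix parent;
   every position of that window is ≻ i.  Two structural facts follow:
   a position is the prefix child of at most one later position (so GP is the
   inverse of PC whenever a later child exists), and if PC j = i with i having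
   a prefix parent then PP j = PP i.
   Then "prefix ⇒ global" is immediate, while "global ⇒ prefix" proves the PC
   inequality from GP (PC i) = i and the PP inequality by downward induction,
   climbing from i to its unique later child j and using PP j = PP i. *)

From mathcomp Require Import all_boot all_order.
From mathcomp Require Import zify.
Import Order.TTheory.
Set Implicit Arguments. Unset Strict Implicit.
Set Warnings "-notation-overridden".

Section PrecOrder.
Context {d : Order.disp_t} {T : orderType d}.
Implicit Types S : nat -> T.

Lemma prec_trans S a b c : prec S a b -> prec S b c -> prec S a c.
Proof.
rewrite /prec => /orP[h1|/andP[/eqP e1 h1]] /orP[h2|/andP[/eqP e2 h2]].
- by rewrite (lt_trans h1 h2).
- by rewrite -e2 h1.
- by rewrite e1 h2.
- by rewrite e1 e2 eqxx (ltn_trans h1 h2) orbT.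
Qed.

Lemma prec_irr S a : prec S a a = false.
Proof. by rewrite /prec ltxx ltnn andbF. Qed.

Lemma prec_asym S a b : prec S a b -> ~~ prec S b a.
Proof. by move=> h1; apply/negP => h2; have := prec_trans h1 h2; rewrite prec_irr. Qed.

Lemma prec_total S a b : a != b -> prec S a b || prec S b a.
Proof.
move=> nab; rewrite /prec; case: (ltgtP (S a) (S b)) => //= _.
by case: (ltngtP a b) => // eab; rewrite eab eqxx in nab.
Qed.

Lemma preceq_refl S a : preceq S a a.
Proof. by rewrite /preceq eqxx orbT. Qed.

Lemma preceq_trans S a b c : preceq S a b -> preceq S b c -> preceq S a c.
Proof.
rewrite /preceq => /orP[h1|/eqP->] // /orP[h2|/eqP<-]; last by rewrite h1.
by rewrite (prec_trans h1 h2).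
Qed.

Lemma negprec_preceq S a b : ~~ prec S a b -> preceq S b a.
Proof.
move=> np; case: (eqVneq a b) => [->|nab]; first exact: preceq_refl.
by have := prec_total S nab; rewrite (negbTE np) /= /preceq => ->.
Qed.

End PrecOrder.

Section PrefixParent.
Context {d : Order.disp_t} {T : orderType d}.
Variable S : nat -> T.

Lemma ppsearch_some i k j : ppsearch S i k = Some j ->
  [/\ 0 < j <= k, prec S j i & forall l, j < l <= k -> ~~ prec S l i].
Proof.
elim: k => //= k IH; case: ifP => h.
  by case=> <-; split=> // [|l]; lia.
case/IH => jk pj hl; split=> //; first lia.
move=> l /andP[jl]; rewrite leq_eqVlt => /orP[/eqP->|lk]; first by rewrite h.
by apply: hl; rewrite jl.
Qed.

Lemma ppsearch_none i k : ppsearch S i k = None ->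
  forall l, 0 < l <= k -> ~~ prec S l i.
Proof.
elim: k => [_ l|k IH /=]; first lia.
case: ifP => // h /IH hl l /andP[l0]; rewrite leq_eqVlt => /orP[/eqP->|lk].
  by rewrite h.
by apply: hl; rewrite l0.
Qed.

Lemma PP_spec i :
  (PP S i = i /\ forall l, 0 < l < i -> ~~ prec S l i) \/
  [/\ 0 < PP S i < i, prec S (PP S i) i &
      forall l, PP S i < l < i -> ~~ prec S l i].
Proof.
rewrite /PP; case E: (ppsearch S i i.-1) => [j|].
  case/ppsearch_some: E => jk pj hl; right; split=> //; first lia.
  by move=> l li; apply: hl; lia.
by left; split=> // l li; apply: (ppsearch_none E); lia.
Qed.

(* Left boundary of the window in which the prefix child of i is chosen. *)
Definition lo i := if PP S i == i then 0 else PP S i.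

Lemma lo_window i l : lo i < l < i -> prec S i l.
Proof.
move=> hl; have li : l != i by apply/eqP; lia.
have np : ~~ prec S l i.
  move: hl; rewrite /lo; case: (PP_spec i) => [[-> nsm]|[pi _ nsm]].
    by rewrite eqxx => hl; apply: nsm; lia.
  have -> : (PP S i == i) = false by apply/eqP; lia.
  exact: nsm.
by have := prec_total S li; rewrite (negbTE np).
Qed.

Lemma lo_pos i : 0 < lo i -> lo i = PP S i /\ prec S (lo i) i.
Proof.
rewrite /lo; case: ifP => // /negbT ne _; split=> //.
by case: (PP_spec i) => [[e _]|[_ pp _]] //; rewrite e eqxx in ne.
Qed.

End PrefixParent.

Section PrefixChild.
Context {d : Order.disp_t} {T : orderType d}.
Variable S : nat -> T.

Lemma foldl_prec_min x s :
  let r := foldl (fun best k => if prec S k best then k else best) x s in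
  r \in x :: s /\ forall l, l \in x :: s -> preceq S r l.
Proof.
elim: s x => [|y s IH] x /=.
  by split=> [|l]; rewrite ?mem_seq1 ?inE // => /eqP->; exact: preceq_refl.
set z := if prec S y x then y else x.
have [zin zmin] := IH z; split.
  move: zin; rewrite !inE => /orP[/eqP->|->]; last by rewrite !orbT.
  by rewrite /z; case: ifP; rewrite eqxx ?orbT.
have zx : preceq S z x /\ preceq S z y.
  rewrite /z; case: ifP => h; first by split; [rewrite /preceq h | exact: preceq_refl].
  by split; [exact: preceq_refl | exact: negprec_preceq (negbT h)].
move=> l; rewrite !inE => /orP[/eqP->|/orP[/eqP->|ls]].
- exact: preceq_trans (zmin z (mem_head _ _)) zx.1.
- exact: preceq_trans (zmin z (mem_head _ _)) zx.2.
- by apply: zmin; rewrite inE ls orbT.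
Qed.

Lemma argmin_spec a b : a <= b ->
  a <= argmin S a b <= b /\ forall l, a <= l <= b -> preceq S (argmin S a b) l.
Proof.
move=> ab; have [rin rmin] := foldl_prec_min a (iota a.+1 (b - a)).
have mem l : (l \in a :: iota a.+1 (b - a)) = (a <= l <= b).
  by rewrite inE mem_iota; apply/idP/idP; lia.
by rewrite /argmin -mem; split=> // l; rewrite -mem; exact: rmin.
Qed.

Lemma PC_spec i : 0 < i -> PC S i = i \/
  lo S i < PC S i < i /\ forall l, lo S i < l < i -> preceq S (PC S i) l.
Proof.
move=> i0; rewrite /PC /lo; case: ifP => i1; first by left; lia.
case: ifP => [/eqP ei|ne].
  have [hb hmin] := argmin_spec (a := 1) (b := i.-1) ltac:(lia).
  by right; split=> [|l hl]; [lia | apply: hmin; lia].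
case: ifP => [_|/negbT ne']; first by left.
have pi : PP S i < i by case: (PP_spec S i) => [[e _]|[? _ _]]; [rewrite e eqxx in ne | lia].
have [hb hmin] := argmin_spec (a := (PP S i).+1) (b := i.-1) ltac:(lia).
by right; split=> [|l hl]; [lia | apply: hmin; lia].
Qed.

Lemma PC_inj c j1 j2 : c < j1 -> PC S j1 = c -> PC S j2 = c -> j1 <= j2 -> j1 = j2.
Proof.
move=> cj1 e1 e2; rewrite leq_eqVlt => /orP[/eqP //|j12].
case: (PC_spec (i := j1) ltac:(lia)) => [|[w1 _]]; first lia.
case: (PC_spec (i := j2) ltac:(lia)) => [|[w2 min2]]; first lia.
rewrite e1 in w1; rewrite e2 in w2 min2.
have j1c : prec S j1 c by apply: lo_window; lia.
have /orP[cj|/eqP] : preceq S c j1 by apply: min2; lia.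
  by rewrite (negbTE (prec_asym cj)) in j1c.
lia.
Qed.

Lemma PC_PP i j : i < j -> PC S j = i -> PP S i != i -> PP S j = PP S i.
Proof.
move=> ij e ne.
case: (PP_spec S i) => [[e' _]|[pi ppi nsm]]; first by rewrite e' eqxx in ne.
case: (PC_spec (i := j) ltac:(lia)) => [|[w wmin]]; first lia.
rewrite e in w wmin.
have ji : prec S j i by apply: lo_window; lia.
case: (ltngtP (lo S j) (PP S i)) => c.
- have /orP[ipp|/eqP] : preceq S i (PP S i) by apply: wmin; lia.
    by rewrite (negbTE (prec_asym ppi)) in ipp.
  lia.
- have [lj plj] := lo_pos (S := S) (i := j) ltac:(lia).
  by have := nsm (lo S j) ltac:(lia); rewrite (prec_trans plj ji).
- by have [<- _] := lo_pos (S := S) (i := j) ltac:(lia).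
Qed.

End PrefixChild.

Section GlobalParent.
Context {d : Order.disp_t} {T : orderType d}.
Variables (S : nat -> T) (m : nat).

Lemma GP_spec c :
  (c < GP S m c <= m /\ PC S (GP S m c) = c) \/
  (GP S m c = PP S c /\ forall j, c < j <= m -> PC S j != c).
Proof.
rewrite /GP; set s := iota c.+1 (m - c); set a := fun j => PC S j == c.
case H: (has a s).
  left; rewrite -has_find H.
  have hm : nth 0 s (find a s) \in s by rewrite mem_nth // -has_find.
  split; last by apply/eqP; exact: (nth_find 0 H).
  by move: hm; rewrite mem_iota; lia.
right; have -> : (find a s < size s) = false by rewrite -has_find H.
split=> // j hj; apply/negP => hp.
have : has a s by apply/hasP; exists j; rewrite ?mem_iota //; lia.
by rewrite H.
Qed.

Lemma GP_child c j : c < j <= m -> PC S j = c -> GP S m c = j.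
Proof.
move=> hj e; case: (GP_spec c) => [[hg eg]|[_ nochild]].
  have cg : c < GP S m c by lia.
  case: (leqP (GP S m c) j) => h; first exact: PC_inj cg eg e h.
  by apply/esym; apply: PC_inj e eg (ltnW h); lia.
by have := nochild j hj; rewrite e eqxx.
Qed.

End GlobalParent.

Section Equivalence.
Context {d : Order.disp_t} {T : orderType d}.
Variables (m : nat) (P S : nat -> T).

Lemma prefix_to_global :
  (forall i, 1 <= i <= m -> preceq S (PP P i) i && preceq S i (PC P i)) ->
  forall i, 1 <= i <= m -> preceq S (GP P m i) i.
Proof.
move=> H i hi; case: (GP_spec P m i) => [[hj ej]|[-> _]].
  by have /andP[_] := H (GP P m i) ltac:(lia); rewrite ej.
by case/andP: (H i hi).
Qed.

Hypothesis global : forall i, 1 <= i <= m -> preceq S (GP P m i) i.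

Lemma global_PC i : 1 <= i <= m -> preceq S i (PC P i).
Proof.
move=> hi; case: (PC_spec P (i := i) ltac:(lia)) => [->|[w _]].
  exact: preceq_refl.
have := global (i := PC P i) ltac:(lia).
by rewrite (GP_child (c := PC P i) (j := i)) //; lia.
Qed.

(* Downward induction on i: climb to the later child, which has the same PP. *)
Lemma global_PP i : 1 <= i <= m -> preceq S (PP P i) i.
Proof.
move: {2}(m - i) (leqnn (m - i)) => k; elim: k i => [|k IH] i hk hi.
all: case: (PP_spec P i) => [[-> _]|[pi _ _]]; first exact: preceq_refl.
all: case: (GP_spec P m i) => [[hj ej]|[e _]]; last by rewrite -e; apply: global.
  lia.
have ne : PP P i != i by apply/eqP; lia.
have ig : i < GP P m i by lia.
have := IH (GP P m i) ltac:(lia) ltac:(lia); rewrite (PC_PP ig ej ne) => pp_child.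
exact: preceq_trans pp_child (global hi).
Qed.

End Equivalence.

Theorem mainTheorem3 (d : Order.disp_t) (T : orderType d) (m : nat)
    (P S : nat -> T) :
  (forall i, 1 <= i <= m -> preceq S (PP P i) i && preceq S i (PC P i)) <->
  (forall i, 1 <= i <= m -> preceq S (GP P m i) i).
Proof.
split; first exact: prefix_to_global.
by move=> H i hi; rewrite (global_PP H hi) (global_PC H hi).
Qed.
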